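(* Let $x,y$ be nonzero complex numbers, $N\ge1$ and $0\le j,k\le N$; put $m=\min(j,k)$, $M=\max(j,k)$ and $c=\frac{1+xy}{2\sqrt{xy}}$. Then the skew Schur polynomial indexed by the shape $(N,j)/(k)$ and evaluated at the two variables $x,y^{-1}$ satisfies $$s_{(N,j)/(k)}(x,y^{-1})=(xy^{-1})^{(N+j-k)/2}\,U_{m}(c)\,U_{N-M}(c)=\frac{1}{x^{k}y^{N+j}}\sum_{r=0}^{m}(xy)^r\sum_{r=M}^{N}(xy)^r,$$ where $U_n$ are the Chebyshev polynomials of the second kind.
   Context: Chebyshev polynomials of the second kind: $U_0(z)=1$, $U_1(z)=2z$, $U_{n+1}(z)=2zU_n(z)-U_{n-1}(z)$. $s_{(N,j)/(k)}$ denotes the skew Schur polynomial of the skew shape obtained from the partition $(N,j)$ by removing the partition $(k)$ (it is $0$ unless $(k)\subseteq(N,j)$). The same branch of $\sqrt{xy}$ is used throughout. *)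

From HB Require Import structures.
From mathcomp Require Import all_boot all_order all_algebra.
Set Implicit Arguments. Unset Strict Implicit. Unset Printing Implicit Defensive.
Import Order.TTheory GRing.Theory Num.Theory.
Local Open Scope ring_scope.

(* Chebyshev polynomials of the second kind, evaluated at z:
   U_0 = 1, U_1 = 2z, U_{n+1} = 2 z U_n - U_{n-1}.
   chebU_pair n z = (U_n(z), U_{n+1}(z)). *)
Fixpoint chebU_pair (R : nzRingType) (n : nat) (z : R) : R * R :=
  match n with
  | 0 => (1, 2 * z)
  | n'.+1 => let p := chebU_pair n' z in (p.2, 2 * z * p.2 - p.1)
  end.
Definition chebU (R : nzRingType) (n : nat) (z : R) : R := (chebU_pair n z).1.

(* Partitions are sequences of nats (weakly decreasing); nth 0 gives parts. *)
Definition width (la : seq nat) : nat := foldr maxn 0%N la.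

(* cell (row i, column c), 0-based, belongs to the skew diagram la/mu *)
Definition skew_cell (la mu : seq nat) (i c : nat) : bool :=
  (nth 0%N mu i <= c)%N && (c < nth 0%N la i)%N.

Definition entry n (o : option 'I_n) : nat := if o is Some i then val i else 0%N.

Definition cells (la : seq nat) := ('I_(size la) * 'I_(width la))%type.

(* semistandard fillings of la/mu with entries in {0,..,n-1}:
   cells of the diagram get Some entry, other positions None;
   rows weakly increase, columns strictly increase. *)
Definition ssyt_filling (la mu : seq nat) (n : nat)
    (T : {ffun cells la -> option 'I_n}) : bool :=
  [forall p : cells la, skew_cell la mu p.1 p.2 == (T p != None)] &&
  [forall p : cells la, forall q : cells la,
     (skew_cell la mu p.1 p.2 && skew_cell la mu q.1 q.2) ==>
     ((((val p.1 == val q.1) && (val q.2 == (val p.2).+1)) ==>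
          (entry (T p) <= entry (T q))%N) &&
      (((val q.1 == (val p.1).+1) && (val q.2 == val p.2)) ==>
          (entry (T p) < entry (T q))%N))].

Definition tab_weight (R : comNzRingType) (la mu : seq nat) (n : nat) (z : 'I_n -> R)
    (T : {ffun cells la -> option 'I_n}) : R :=
  \prod_(p : cells la | skew_cell la mu p.1 p.2)
     (if T p is Some i then z i else 1).

Definition skew_schur (R : comNzRingType) (la mu : seq nat) (n : nat) (z : 'I_n -> R) : R :=
  if [forall i : 'I_(size mu), (nth 0%N mu i <= nth 0%N la i)%N]
  then \sum_(T : {ffun cells la -> option 'I_n} | @ssyt_filling la mu n T)
         @tab_weight R la mu n z T
  else 0.

Definition two_vars (R : nzRingType) (a b : R) : 'I_2 -> R :=
  fun i => if val i == 0%N then a else b.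

(* A semistandard filling of (N, j)/(k) with entries in {0, 1} has weakly
   increasing rows, so it is determined by the columns t and u where the 1s
   start in its two rows.  Column strictness on the overlap k <= c < j forces
   max(j, k) <= t <= N and u <= min(j, k), and every such pair occurs.  The
   weight x^(t-k) y^-(N-t) x^u y^-(j-u) equals x^-k y^-(N+j) (xy)^t (xy)^u, so
   the sum factors into two geometric sums in xy.  The three-term recurrence
   gives s^n U_n((1 + s^2)/(2s)) = 1 + s^2 + ... + s^(2n), which turns these
   sums into Chebyshev values. *)

From HB Require Import structures.
From mathcomp Require Import all_boot all_order all_algebra.
From mathcomp Require Import ring zify.
Set Implicit Arguments. Unset Strict Implicit. Unset Printing Implicit Defensive.
Import Order.TTheory GRing.Theory Num.Theory.
Local Open Scope ring_scope.

Lemma find_iota_threshold (f : pred nat) (a n t : nat) :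
  (a <= t <= n)%N -> (forall c, (a <= c < n)%N -> f c = (t <= c)%N) ->
  find (fun c => (a <= c)%N && f c) (iota 0 n) = t.
Proof.
move=> /andP [le_at le_tn] fE.
rewrite -(subnKC le_tn) iotaD find_cat size_iota /= ifF; last first.
  apply/hasPn => c; rewrite mem_iota add0n => /= lt_ct.
  apply/negP => /andP [le_ac]; rewrite fE; first by rewrite leqNgt lt_ct.
  by rewrite le_ac (leq_trans lt_ct le_tn).
case: (n - t)%N (subnKC le_tn) => [|d] nE /=; first by rewrite addn0.
by rewrite add0n fE ?leqnn ?le_at ?addn0 // -nE addnS ltnS leq_addr.
Qed.

Lemma find_iota_monotone (f : pred nat) (a n c : nat) :
  (forall d, (a <= d)%N -> (d.+1 < n)%N -> f d -> f d.+1) -> (a <= c < n)%N ->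
  f c = (find (fun d => (a <= d)%N && f d) (iota 0 n) <= c)%N.
Proof.
move=> fS /andP [le_ac lt_cn]; set t := find _ _.
have [lt_ct | le_tc] := ltnP c t.
  by have := before_find 0%N lt_ct; rewrite nth_iota // add0n le_ac.
have has_t : has (fun d => (a <= d)%N && f d) (iota 0 n).
  by rewrite has_find size_iota (leq_ltn_trans le_tc lt_cn).
have := nth_find 0%N has_t; rewrite -/t nth_iota; last by rewrite -(size_iota 0 n) -has_find.
rewrite add0n => /andP [le_at ft].
move: lt_cn; rewrite -(subnKC le_tc); elim: (c - t)%N => [|d IH]; first by rewrite addn0.
rewrite addnS => lt_dn.
by apply: fS; [rewrite (leq_trans le_at) ?leq_addr | | apply/IH/ltnW].
Qed.

Lemma prod_nat_threshold (R : pzSemiRingType) (v w : R) (a t n : nat) :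
  (a <= t <= n)%N ->
  \prod_(a <= c < n) (if (t <= c)%N then v else w) = w ^+ (t - a) * v ^+ (n - t).
Proof.
move=> /andP [le_at le_tn]; rewrite (big_cat_nat le_at le_tn).
rewrite (@eq_big_nat _ _ _ a t _ (fun=> w)) => [|c /andP [_ lt_ct]]; last first.
  by rewrite leqNgt lt_ct.
rewrite (@eq_big_nat _ _ _ t n _ (fun=> v)) => [|c /andP [le_tc _]]; last by rewrite le_tc.
by rewrite !prodr_const_nat.
Qed.

Lemma chebU0 (R : nzRingType) (z : R) : chebU 0 z = 1.
Proof. by []. Qed.

Lemma chebU1 (R : nzRingType) (z : R) : chebU 1 z = 2 * z.
Proof. by []. Qed.

Lemma chebUSS (R : nzRingType) (n : nat) (z : R) :
  chebU n.+2 z = 2 * z * chebU n.+1 z - chebU n z.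
Proof. by []. Qed.

Lemma chebU_geometric (R : comNzRingType) (s z : R) (n : nat) :
  2 * s * z = 1 + s ^+ 2 ->
  s ^+ n * chebU n z = \sum_(0 <= r < n.+1) (s ^+ 2) ^+ r.
Proof.
move=> sz; set S := fun n => \sum_(0 <= r < n.+1) (s ^+ 2) ^+ r.
have SS m : S m.+1 = S m + (s ^+ 2) ^+ m.+1 by rewrite /S big_nat_recr.
suff: s ^+ n * chebU n z = S n /\ s ^+ n.+1 * chebU n.+1 z = S n.+1 by case.
elim: n => [|n [IHn IHn1]].
  rewrite SS /S big_nat1 chebU0 chebU1 mulr1; split=> //.
  by rewrite mulrA -sz; ring.
split=> //.
have q1 : (s ^+ 2) ^+ n.+1 = s ^+ n.+1 * chebU n.+1 z - s ^+ n * chebU n z.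
  by rewrite IHn1 IHn SS addrC addKr.
rewrite chebUSS SS -IHn1 [(s ^+ 2) ^+ n.+2]exprS q1.
transitivity (s ^+ n.+1 * chebU n.+1 z * (2 * s * z) - s ^+ n.+2 * chebU n z).
  by rewrite !exprS; ring.
by rewrite sz !exprS; ring.
Qed.

Lemma sum_expr_shift (R : pzSemiRingType) (q : R) (a n : nat) : (a <= n)%N ->
  \sum_(a <= r < n.+1) q ^+ r = q ^+ a * \sum_(0 <= r < (n - a).+1) q ^+ r.
Proof.
move=> le_an; rewrite -{1}(add0n a) big_addn subSn // mulr_sumr.
by apply: eq_bigr => r _; rewrite addnC exprD.
Qed.

Lemma two_row_monomialE (F : fieldType) (x y : F) (N j k t u : nat) :
  x != 0 -> y != 0 -> (k <= t <= N)%N -> (u <= j)%N ->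
  x ^+ (t - k) * y^-1 ^+ (N - t) * (x ^+ u * y^-1 ^+ (j - u))
  = (x ^+ k * y ^+ (N + j))^-1 * ((x * y) ^+ t * (x * y) ^+ u).
Proof.
move=> x0 y0 /andP [le_kt le_tN] le_uj.
have y1 : y^-1 != 0 by rewrite invr_eq0.
rewrite !expfB_cond ?(negbTE x0) ?(negbTE y1) // exprD !exprMn !exprVn.
by field; rewrite !expf_neq0 ?oner_neq0.
Qed.

Lemma entry_le1 (o : option 'I_2) : (entry o <= 1)%N.
Proof. by case: o => // -[[|[|]]]. Qed.

Section TwoRowFillings.
Variables (N j k : nat).
Hypotheses (le_jN : (j <= N)%N) (le_kN : (k <= N)%N).

Local Notation la := [:: N; j].
Local Notation mu := [:: k].
Local Notation filling := {ffun cells la -> option 'I_2}.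
Local Notation ssyt := (@ssyt_filling la mu 2).
Local Notation in_skew := (skew_cell la mu).

Lemma width_shape : width la = N.
Proof. by rewrite /width /= maxn0; apply/maxn_idPl. Qed.

Lemma in_skew_cell i c :
  in_skew i c -> exists p : cells la, p.1 = i :> nat /\ p.2 = c :> nat.
Proof.
move=> sk; have [lt_i lt_c] : (i < size la)%N /\ (c < width la)%N.
  rewrite width_shape.
  case: i sk => [|[|i]] /andP [_] /= lt_c; [by [] | | by rewrite nth_nil in lt_c].
  by split; last exact: leq_trans lt_c le_jN.
by exists (Ordinal lt_i, Ordinal lt_c).
Qed.

Lemma in_skew0 c : in_skew 0 c = (k <= c < N)%N. Proof. by []. Qed.
Lemma in_skew1 c : in_skew 1 c = (c < j)%N. Proof. by []. Qed.

Definition one_at (T : filling) (i c : nat) : bool :=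
  match (insub i : option 'I_(size la)), (insub c : option 'I_(width la)) with
  | Some i', Some c' => entry (T (i', c')) == 1%N
  | _, _ => false
  end.

Lemma one_at_cell T (p : cells la) i c : p.1 = i :> nat -> p.2 = c :> nat ->
  one_at T i c = (entry (T p) == 1%N).
Proof. by move=> <- <-; rewrite /one_at !valK; case: p. Qed.

Lemma ssyt_adjacent T (p q : cells la) :
  ssyt T -> in_skew p.1 p.2 -> in_skew q.1 q.2 ->
  (p.1 = q.1 :> nat -> q.2 = p.2.+1 :> nat -> entry (T p) <= entry (T q))%N /\
  (q.1 = p.1.+1 :> nat -> q.2 = p.2 :> nat -> entry (T p) < entry (T q))%N.
Proof.
case/andP => _ /forallP /(_ p) /forallP /(_ q) adj skp skq.
rewrite skp skq /= in adj; case/andP: adj => /implyP row /implyP col.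
by split=> [e1 e2 | e1 e2]; [apply: row | apply: col]; rewrite e1 e2 !eqxx.
Qed.

Lemma ssyt_row T i c : ssyt T -> in_skew i c -> in_skew i c.+1 ->
  one_at T i c -> one_at T i c.+1.
Proof.
move=> sT sk sk1.
have [p [pi pc]] := in_skew_cell sk; have [q [qi qc]] := in_skew_cell sk1.
have skp : in_skew p.1 p.2 by rewrite pi pc.
have skq : in_skew q.1 q.2 by rewrite qi qc.
have [row _] := ssyt_adjacent sT skp skq.
rewrite (one_at_cell T pi pc) (one_at_cell T qi qc).
have := entry_le1 (T q); lia.
Qed.

Lemma ssyt_col T c : ssyt T -> in_skew 0 c -> in_skew 1 c ->
  ~~ one_at T 0 c && one_at T 1 c.
Proof.
move=> sT sk0 sk1.
have [p [pi pc]] := in_skew_cell sk0; have [q [qi qc]] := in_skew_cell sk1.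
have skp : in_skew p.1 p.2 by rewrite pi pc.
have skq : in_skew q.1 q.2 by rewrite qi qc.
have [_ col] := ssyt_adjacent sT skp skq.
rewrite (one_at_cell T pi pc) (one_at_cell T qi qc).
have := entry_le1 (T q); lia.
Qed.

Lemma ssyt_support T (p : cells la) : ssyt T -> (T p != None) = in_skew p.1 p.2.
Proof. by case/andP => /forallP /(_ p) /eqP. Qed.

(* When row [i] contains no 1, [find] returns the row length [nth 0 la i]. *)
Definition first_one (T : filling) (i : nat) : nat :=
  find (fun c => (nth 0%N mu i <= c)%N && one_at T i c) (iota 0 (nth 0%N la i)).

Lemma one_at_first_one T i c : ssyt T -> in_skew i c ->
  one_at T i c = (first_one T i <= c)%N.
Proof.
move=> sT sk; apply: find_iota_monotone sk => d le_d lt_d.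
have sk_d : in_skew i d by rewrite /skew_cell le_d ltnW.
have sk_d1 : in_skew i d.+1 by rewrite /skew_cell lt_d leqW.
exact: ssyt_row sT sk_d sk_d1.
Qed.

Lemma first_one_range T : ssyt T ->
  (maxn j k <= first_one T 0 <= N)%N && (first_one T 1 <= minn j k)%N.
Proof.
move=> sT.
have le_tN : (first_one T 0 <= N)%N by rewrite -[X in (_ <= X)%N](size_iota 0 N) find_size.
have le_uj : (first_one T 1 <= j)%N by rewrite -[X in (_ <= X)%N](size_iota 0 j) find_size.
have le_kt : (k <= first_one T 0)%N.
  have [lt_tN | ] := ltnP (first_one T 0) N; last exact: leq_trans.
  have has_t : has (fun c => (k <= c)%N && one_at T 0 c) (iota 0 N).
    by rewrite has_find size_iota.
  by have /andP [] := nth_find 0%N has_t; rewrite nth_iota.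
have col c : (k <= c < j)%N -> (c < first_one T 0)%N && (first_one T 1 <= c)%N.
  move=> /andP [le_kc lt_cj].
  have sk0 : in_skew 0 c by rewrite in_skew0 le_kc (leq_trans lt_cj le_jN).
  have sk1 : in_skew 1 c by rewrite in_skew1.
  by have := ssyt_col sT sk0 sk1; rewrite !one_at_first_one // -ltnNge.
have := col j.-1; have := col k; lia.
Qed.

Definition step_filling (t u : nat) : filling :=
  [ffun p : cells la =>
     if in_skew p.1 p.2 then Some (inord (nth 0%N [:: t; u] p.1 <= p.2)%N) else None].

Lemma entry_step t u (p : cells la) :
  entry (step_filling t u p) = (in_skew p.1 p.2 && (nth 0%N [:: t; u] p.1 <= p.2))%N.
Proof. by rewrite ffunE; case: ifP => //= _; rewrite inordK // ltnS leq_b1. Qed.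

Lemma one_at_step t u i c : in_skew i c ->
  one_at (step_filling t u) i c = (nth 0%N [:: t; u] i <= c)%N.
Proof.
move=> sk; have [p [pi pc]] := in_skew_cell sk.
by rewrite (one_at_cell _ pi pc) entry_step pi pc sk; case: (_ <= _)%N.
Qed.

Lemma step_filling_ssyt t u : (maxn j k <= t)%N -> (u <= minn j k)%N ->
  ssyt (step_filling t u).
Proof.
move=> le_t le_u; apply/andP; split.
  by apply/forallP => p; rewrite ffunE; case: ifP.
apply/forallP => p; apply/forallP => q; apply/implyP => /andP [skp skq].
rewrite !entry_step skp skq /=.
apply/andP; split; apply/implyP => /andP [/eqP e1 /eqP e2].
  by rewrite -e1 e2; case: (leqP (nth 0%N [:: t; u] p.1) p.2) => [/leqW -> // | _].
have {}e1 : q.1 = p.1.+1 :> nat := e1; have {}e2 : q.2 = p.2 :> nat := e2.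
have p1 : p.1 = 0%N :> nat by have := ltn_ord q.1; have : size la = 2%N by []; lia.
rewrite p1 in_skew0 in skp; rewrite e1 e2 p1 in_skew1 in skq; rewrite e1 e2 p1.
case/andP: skp => le_kc _.
have -> : (t <= p.2)%N = false by apply/negbTE; rewrite -ltnNge; lia.
by rewrite (leq_trans le_u) // (leq_trans (geq_minr j k) le_kc).
Qed.

Lemma first_one_step t u : (maxn j k <= t <= N)%N -> (u <= minn j k)%N ->
  first_one (step_filling t u) 0 = t /\ first_one (step_filling t u) 1 = u.
Proof.
move=> /andP [le_t le_tN] le_u.
split; apply: find_iota_threshold => [|c sk]; try exact: one_at_step.
  by rewrite /= le_tN andbT (leq_trans (leq_maxr j k)).
by rewrite (leq_trans le_u (geq_minl j k)).
Qed.

Lemma step_first_one T : ssyt T -> step_filling (first_one T 0) (first_one T 1) = T.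
Proof.
move=> sT; apply/ffunP => p; rewrite ffunE.
have := ssyt_support p sT; case: ifP => skp; last by case: (T p).
case Tp: (T p) => [e|] // _; congr Some; apply: val_inj; rewrite /= inordK ?ltnS ?leq_b1 //.
have := one_at_first_one sT skp; rewrite (one_at_cell T (erefl _) (erefl _)) Tp /=.
have -> : nth 0%N [:: first_one T 0; first_one T 1] p.1 = first_one T p.1.
  by case: p.1 => -[|[|]].
by case: e {Tp} => -[|[|]] //= _ <-.
Qed.

Lemma sum_ssyt (V : nmodType) (F : filling -> V) :
  \sum_(T | ssyt T) F T =
  \sum_(tu : 'I_N.+1 * 'I_N.+1 | (maxn j k <= tu.1)%N && (tu.2 <= minn j k)%N)
     F (step_filling tu.1 tu.2).
Proof.
have first_one_lt T : ssyt T -> (first_one T 0 < N.+1)%N && (first_one T 1 < N.+1)%N.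
  move/first_one_range => /andP [/andP [_ le_tN] le_u].
  by rewrite !ltnS le_tN (leq_trans le_u) // (leq_trans (geq_minl j k)).
rewrite (reindex_onto (fun tu : 'I_N.+1 * 'I_N.+1 => step_filling tu.1 tu.2)
           (fun T => (inord (first_one T 0), inord (first_one T 1)))) /=; last first.
  move=> T sT; case/andP: (first_one_lt T sT) => lt_t lt_u.
  by rewrite !inordK ?step_first_one.
apply: eq_bigl => -[t u] /=; apply/andP/andP => [[sT /eqP [et eu]] | [le_t le_u]].
  case/andP: (first_one_lt _ sT) => lt_t lt_u.
  move: (congr1 val et) (congr1 val eu) (first_one_range sT) => /=.
  by rewrite !inordK // => -> -> /andP [/andP [-> _] ->].
have [et eu] := first_one_step (introT andP (conj le_t (ltnSE (ltn_ord t)))) le_u.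
by split; [exact: step_filling_ssyt | rewrite et eu !inord_val].
Qed.

Lemma weight_step (R : comNzRingType) (a b : R) t u :
  (maxn j k <= t <= N)%N -> (u <= minn j k)%N ->
  @tab_weight R la mu 2 (two_vars a b) (step_filling t u)
  = a ^+ (t - k) * b ^+ (N - t) * (a ^+ u * b ^+ (j - u)).
Proof.
move=> /andP [le_t le_tN] le_u.
have le_kt : (k <= t)%N by rewrite (leq_trans (leq_maxr j k)).
have le_uj : (u <= j)%N by rewrite (leq_trans le_u) ?geq_minl.
pose G i c := if (nth 0%N [:: t; u] i <= c)%N then b else a.
rewrite /tab_weight (eq_bigr (fun p : cells la => G p.1 p.2)) => [|p skp]; last first.
  rewrite ffunE skp /two_vars /= inordK ?ltnS ?leq_b1 // /G.
  by case: (_ <= _)%N.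
rewrite -(pair_big_dep xpredT (fun (i : 'I_(size la)) (c : 'I_(width la)) => in_skew i c)
                      (fun i c => G i c)) /=.
rewrite !big_ord_recl big_ord0 mulr1 -!big_mkord.
have row0 : \prod_(0 <= c < N | in_skew 0 c) G 0%N c = a ^+ (t - k) * b ^+ (N - t).
  rewrite -(prod_nat_threshold b a (introT andP (conj le_kt le_tN))).
  rewrite (big_nat_widenl _ _ _ _ _ (leq0n k)).
  by apply: congr_big_nat => // c /andP [_ lt_cN]; rewrite in_skew0 lt_cN andbT.
have row1 : \prod_(0 <= c < N | in_skew 1 c) G 1%N c = a ^+ u * b ^+ (j - u).
  rewrite -[u in a ^+ u](subn0 u).
  rewrite -(prod_nat_threshold b a (introT andP (conj (leq0n u) le_uj))).
  by rewrite (big_nat_widen _ _ _ _ _ le_jN).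
by rewrite [maxn _ _]width_shape; congr (_ * _).
Qed.

Lemma skew_schur_two_rows (F : fieldType) (x y : F) : x != 0 -> y != 0 ->
  skew_schur la mu (two_vars x y^-1)
  = (x ^+ k * y ^+ (N + j))^-1 *
    ((\sum_(0 <= r < (minn j k).+1) (x * y) ^+ r) *
     (\sum_(maxn j k <= r < N.+1) (x * y) ^+ r)).
Proof.
move=> x0 y0; rewrite /skew_schur (_ : [forall i, _] = true); last first.
  by apply/forallP => -[[|i] lt_i].
rewrite sum_ssyt -(pair_big_dep (fun t : 'I_N.+1 => maxn j k <= t)%N
  (fun _ (u : 'I_N.+1) => u <= minn j k)%N
  (fun t u => @tab_weight F la mu 2 (two_vars x y^-1) (step_filling t u))) /=.
have le_mN : ((minn j k).+1 <= N.+1)%N by rewrite ltnS (leq_trans (geq_minl j k)).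
rewrite big_mkord (big_ord_widen _ _ le_mN) big_geq_mkord.
rewrite [X in _ * X]mulrC big_distrlr mulr_sumr.
apply: eq_big => // t le_t; rewrite mulr_sumr.
apply: eq_big => [u | u le_u]; first by rewrite ltnS.
have le_tN : (maxn j k <= t <= N)%N by rewrite le_t -ltnS ltn_ord.
rewrite weight_step // two_row_monomialE //.
  by rewrite (leq_trans (leq_maxr j k)) ?(leq_trans (ltnSE (ltn_ord t))).
by rewrite (leq_trans le_u) ?geq_minl.
Qed.

End TwoRowFillings.

Lemma geometric_sums_chebU (F : fieldType) (x y s : F) (N j k : nat) :
  (2 : F) != 0 -> x != 0 -> y != 0 -> s ^+ 2 = x * y -> (j <= N)%N -> (k <= N)%N ->
  let c := (1 + x * y) / (2 * s) in
  (x ^+ k * y ^+ (N + j))^-1 *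
    ((\sum_(0 <= r < (minn j k).+1) (x * y) ^+ r) *
     (\sum_(maxn j k <= r < N.+1) (x * y) ^+ r))
  = (s / y) ^+ (N + j - k) * chebU (minn j k) c * chebU (N - maxn j k) c.
Proof.
move=> two0 x0 y0 s2 le_jN le_kN c; set m := minn j k; set M := maxn j k.
have s0 : s != 0 by have := mulf_neq0 x0 y0; rewrite -s2 expf_eq0.
have sc : 2 * s * c = 1 + s ^+ 2 by rewrite /c s2; field; rewrite s0 two0.
have le_MN : (M <= N)%N by rewrite geq_max le_jN le_kN.
rewrite (sum_expr_shift _ le_MN) -s2 -!(chebU_geometric _ sc).
have scale : x ^+ k * y ^+ (N + j) * (s / y) ^+ (N + j - k)
             = s ^+ m * (s ^+ 2) ^+ M * s ^+ (N - M).
  set n := (N + j - k)%N.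
  have -> : (N + j = n + k)%N by rewrite subnK // (leq_trans le_kN) ?leq_addr.
  have -> : x ^+ k * y ^+ (n + k) * (s / y) ^+ n = (x * y) ^+ k * s ^+ n.
    by rewrite exprD expr_div_n exprMn; field; rewrite expf_neq0.
  rewrite -s2 -!exprM -!exprD; congr (_ ^+ _); rewrite /n /m /M; lia.
have A0 : x ^+ k * y ^+ (N + j) != 0 by rewrite mulf_neq0 ?expf_neq0.
(* [ring] and [field] do not handle symbolic exponents: abstract the powers. *)
move: (x ^+ k * y ^+ (N + j)) A0 ((s / y) ^+ _) (s ^+ m) (s ^+ 2 ^+ M) (s ^+ (N - M)) scale.
move: (chebU m c) (chebU (N - M) c) => U V A A0 B a b d scale.
rewrite (_ : a * U * (b * (d * V)) = a * b * d * (U * V)); last by ring.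
by rewrite -scale; field.
Qed.

Theorem mainTheorem4 (C : numClosedFieldType) (x y : C) (N j k : nat) :
  x != 0 -> y != 0 -> (1 <= N)%N -> (j <= N)%N -> (k <= N)%N ->
  forall s : C, s ^+ 2 = x * y ->
  let m := minn j k in
  let M := maxn j k in
  let c := (1 + x * y) / (2 * s) in
  skew_schur [:: N; j] [:: k] (two_vars x y^-1)
    = (s / y) ^+ (N + j - k) * chebU m c * chebU (N - M) c
  /\
  skew_schur [:: N; j] [:: k] (two_vars x y^-1)
    = (x ^+ k * y ^+ (N + j))^-1 *
      ((\sum_(0 <= r < m.+1) (x * y) ^+ r) * (\sum_(M <= r < N.+1) (x * y) ^+ r)).
Proof.
move=> x0 y0 _ le_jN le_kN s s2 m M c.
have schurE := skew_schur_two_rows le_jN le_kN x0 y0.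
split; rewrite schurE //.
by apply: geometric_sums_chebU; rewrite ?pnatr_eq0.
Qed.
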